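(* Let $\boldsymbol{\omega}:\mathbb{R}^3\to\mathbb{R}^3$ be a smooth divergence-free vorticity field, let $\boldsymbol{a},\boldsymbol{c}\in\mathbb{R}^3$, and let $\boldsymbol{B}$ be a vortex filament, i.e. a closed streamline of $\boldsymbol{\omega}$ parametrized by a $T$-periodic curve $\boldsymbol{\gamma}:\mathbb{R}\to\mathbb{R}^3$ with $\boldsymbol{\gamma}'(s)=\boldsymbol{\omega}(\boldsymbol{\gamma}(s))$, with $\boldsymbol{a},\boldsymbol{c}\notin\boldsymbol{B}$ and $\boldsymbol{a}\neq\boldsymbol{c}$. With $D$ as defined in the context, \[\int_0^T D(\boldsymbol{a},\boldsymbol{\gamma}(s),\boldsymbol{c})\,ds=-\int_0^T D(\boldsymbol{c},\boldsymbol{\gamma}(s),\boldsymbol{a})\,ds,\] that is, in coordinates advecting with the fluid, $\boldsymbol{a}$'s action on $\boldsymbol{B}$ affects the interaction energy between $\boldsymbol{B}$ and $\boldsymbol{c}$ in an exactly equal and opposite way as $\boldsymbol{c}$'s action on $\boldsymbol{B}$ affects the interaction energy between $\boldsymbol{a}$ and $\boldsymbol{B}$.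
   Context: Interaction energy: for vorticity vectors $\boldsymbol{\beta},\boldsymbol{\gamma}_0\in\mathbb{R}^3$ at points $\boldsymbol{b},\boldsymbol{c}$ (distinct), \[I(\boldsymbol{\beta},\boldsymbol{\gamma}_0,\boldsymbol{c}-\boldsymbol{b})=\frac{1}{16\pi\|\boldsymbol{c}-\boldsymbol{b}\|}\Big[\boldsymbol{\beta}\cdot\boldsymbol{\gamma}_0+\frac{(\boldsymbol{\beta}\cdot(\boldsymbol{c}-\boldsymbol{b}))(\boldsymbol{\gamma}_0\cdot(\boldsymbol{c}-\boldsymbol{b}))}{\|\boldsymbol{c}-\boldsymbol{b}\|^2}\Big]\] (this is the contribution of the pair to the kinetic energy $\frac12\int\|\boldsymbol{u}\|^2$ obtained via the Biot–Savart law). The velocity induced at a point $\boldsymbol{b}$ by the vorticity at $\boldsymbol{a}$ is $\boldsymbol{v}_{\boldsymbol{a}}(\boldsymbol{b})=\frac{1}{4\pi}\frac{\boldsymbol{\omega}(\boldsymbol{a})\times(\boldsymbol{b}-\boldsymbol{a})}{\|\boldsymbol{a}-\boldsymbol{b}\|^3}$. Under the vorticity form of the 3D Euler equations (in coordinates advecting with the fluid), this velocity moves $\boldsymbol{b}$ at rate $\boldsymbol{v}_{\boldsymbol{a}}(\boldsymbol{b})$ and changes the vorticity at $\boldsymbol{b}$ at rate $(\boldsymbol{\omega}(\boldsymbol{b})\cdot\nabla_{\boldsymbol{b}})\boldsymbol{v}_{\boldsymbol{a}}(\boldsymbol{b})$. The effect of $\boldsymbol{a}$'s action on $\boldsymbol{b}$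 on the interaction energy between $\boldsymbol{b}$ and $\boldsymbol{c}$ is the resulting rate of change of $I(\boldsymbol{\omega}(\boldsymbol{b}),\boldsymbol{\omega}(\boldsymbol{c}),\boldsymbol{c}-\boldsymbol{b})$ with $\boldsymbol{c},\boldsymbol{\omega}(\boldsymbol{c})$ held fixed: \[D(\boldsymbol{a},\boldsymbol{b},\boldsymbol{c})=\nabla_{\boldsymbol{b}}I(\boldsymbol{\beta},\boldsymbol{\omega}(\boldsymbol{c}),\boldsymbol{c}-\boldsymbol{b})\big|_{\boldsymbol{\beta}=\boldsymbol{\omega}(\boldsymbol{b})}\cdot\boldsymbol{v}_{\boldsymbol{a}}(\boldsymbol{b})+\nabla_{\boldsymbol{\beta}}I(\boldsymbol{\beta},\boldsymbol{\omega}(\boldsymbol{c}),\boldsymbol{c}-\boldsymbol{b})\big|_{\boldsymbol{\beta}=\boldsymbol{\omega}(\boldsymbol{b})}\cdot\big((\boldsymbol{\omega}(\boldsymbol{b})\cdot\nabla_{\boldsymbol{b}})\boldsymbol{v}_{\boldsymbol{a}}(\boldsymbol{b})\big),\] where in the first term the gradient in the position $\boldsymbol{b}$ is taken with the vorticity argument $\boldsymbol{\beta}$ held fixed. *)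

From Stdlib Require Import Reals List.
From Coquelicot Require Import Coquelicot.
Open Scope R_scope.

Record V3 := mkV3 { vx : R; vy : R; vz : R }.

Inductive idx := I0 | I1 | I2.

Definition coord (i : idx) (v : V3) : R :=
  match i with I0 => vx v | I1 => vy v | I2 => vz v end.

Definition basis (i : idx) : V3 :=
  match i with I0 => mkV3 1 0 0 | I1 => mkV3 0 1 0 | I2 => mkV3 0 0 1 end.

Definition vadd (u v : V3) : V3 := mkV3 (vx u + vx v) (vy u + vy v) (vz u + vz v).
Definition vscale (k : R) (v : V3) : V3 := mkV3 (k * vx v) (k * vy v) (k * vz v).
Definition vsub (u v : V3) : V3 := mkV3 (vx u - vx v) (vy u - vy v) (vz u - vz v).
Definition dot (u v : V3) : R := vx u * vx v + vy u * vy v + vz u * vz v.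
Definition cross (u v : V3) : V3 :=
  mkV3 (vy u * vz v - vz u * vy v)
       (vz u * vx v - vx u * vz v)
       (vx u * vy v - vy u * vx v).
Definition vnorm (v : V3) : R := sqrt (dot v v).

Definition vec_of (f : idx -> R) : V3 := mkV3 (f I0) (f I1) (f I2).

Definition partial (g : V3 -> R) (i : idx) (p : V3) : R :=
  Derive (fun t => g (vadd p (vscale t (basis i)))) 0.

Definition has_partial (g : V3 -> R) (i : idx) (p : V3) : Prop :=
  ex_derive (fun t => g (vadd p (vscale t (basis i)))) 0.

Fixpoint iter_partial (l : list idx) (g : V3 -> R) : V3 -> R :=
  match l with
  | nil => g
  | i :: l' => partial (iter_partial l' g) i
  end.

Definition cont_at (g : V3 -> R) (p : V3) : Prop :=
  forall eps, 0 < eps -> exists delta, 0 < delta /\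
    forall q, vnorm (vsub q p) < delta -> Rabs (g q - g p) < eps.

Definition smooth_scalar (g : V3 -> R) : Prop :=
  forall l : list idx,
    (forall p, cont_at (iter_partial l g) p) /\
    (forall i p, has_partial (iter_partial l g) i p).

Definition smooth_field (w : V3 -> V3) : Prop :=
  forall j, smooth_scalar (fun p => coord j (w p)).

Definition div_free (w : V3 -> V3) : Prop :=
  forall p, partial (fun q => vx (w q)) I0 p
          + partial (fun q => vy (w q)) I1 p
          + partial (fun q => vz (w q)) I2 p = 0.

(** Interaction energy I(beta, gamma0, r), r = c - b. *)
Definition Ienergy (beta g0 r : V3) : R :=
  / (16 * PI * vnorm r) *
  (dot beta g0 + dot beta r * dot g0 r / (vnorm r ^ 2)).

(** Velocity induced at b by the vorticity at a. *)
Definition vel (w : V3 -> V3) (a b : V3) : V3 :=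
  vscale (/ (4 * PI) * / (vnorm (vsub a b) ^ 3)) (cross (w a) (vsub b a)).

Definition Dterm (w : V3 -> V3) (a b c : V3) : R :=
  (* gradient in position b, vorticity argument beta = w b held fixed *)
  let grad_b := vec_of (fun i =>
        partial (fun b' => Ienergy (w b) (w c) (vsub c b')) i b) in
  let grad_beta := vec_of (fun i =>
        partial (fun beta => Ienergy beta (w c) (vsub c b)) i (w b)) in
  let stretch := vec_of (fun j =>
        coord I0 (w b) * partial (fun b' => coord j (vel w a b')) I0 b
      + coord I1 (w b) * partial (fun b' => coord j (vel w a b')) I1 b
      + coord I2 (w b) * partial (fun b' => coord j (vel w a b')) I2 b) in
  dot grad_b (vel w a b) + dot grad_beta stretch.

From Stdlib Require Import Reals Lra.
From Coquelicot Require Import Coquelicot.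
Open Scope R_scope.

(* Let E(a, c; b) := I(v_a(b), w(c), c - b) be the interaction energy of c with the
   velocity induced at b by a, regarded as a vorticity vector.  Along the filament
   (b' = w(b)) the chain rule gives
     d/ds E(a, c; b) = grad_b I(v_a(b), w(c), c - b) . w(b)
                       + I((w(b) . grad) v_a(b), w(c), c - b),
   which is D(a, b, c) with the two arguments of the bilinear form
   (beta, e) |-> grad_b I(beta, w(c), c - b) . e swapped.  The antisymmetric part of that
   form is (beta x e) . (w(c) x (c - b)) / (8 pi |c - b|^3) = -1/2 (beta x e) . v_c(b), so
     d/ds [E(a, c; b) + E(c, a; b)]
       = D(a, b, c) + D(c, b, a) - 1/2 [(v_a x w(b)) . v_c + (v_c x w(b)) . v_a],
   and the bracket vanishes.  Integrating over a period of the closed filament gives the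
   result. *)

Definition biot_savart (A a b : V3) : V3 :=
  vscale (/ (4 * PI) * / vnorm (vsub a b) ^ 3) (cross A (vsub b a)).

Definition biot_savart_dpos (A a b e : V3) : V3 :=
  vscale (/ (4 * PI))
    (vadd (vscale (/ vnorm (vsub a b) ^ 3) (cross A e))
          (vscale (- 3 * dot (vsub b a) e / vnorm (vsub a b) ^ 5) (cross A (vsub b a)))).

Definition Ienergy_dpos (be C r e : V3) : R :=
  / (16 * PI) * (dot be C * dot r e / vnorm r ^ 3
    - (dot be e * dot C r + dot be r * dot C e) / vnorm r ^ 3
    + 3 * dot be r * dot C r * dot r e / vnorm r ^ 5).

Lemma dot_vsub_pos (u v : V3) : u <> v -> 0 < dot (vsub u v) (vsub u v).
Proof.
  destruct u as [x1 y1 z1], v as [x2 y2 z2]; unfold dot, vsub; simpl; intros Huv.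
  destruct (Req_dec x1 x2), (Req_dec y1 y2), (Req_dec z1 z2);
    [subst; contradiction | nra ..].
Qed.

Lemma vnorm_vsub_pos (u v : V3) : u <> v -> 0 < vnorm (vsub u v).
Proof. intros Huv; apply sqrt_lt_R0, dot_vsub_pos, Huv. Qed.

(* Curves are given by their coordinate functions: [auto_derive] can differentiate
   through [X t] but not through [vx (f t)]. *)
Definition curve (X Y Z : R -> R) (t : R) : V3 := mkV3 (X t) (Y t) (Z t).

Definition is_derive_V3 (f : R -> V3) (s : R) (e : V3) : Prop :=
  forall j, is_derive (fun t => coord j (f t)) s (coord j e).

Ltac positivity :=
  match goal with
  | |- 0 < _ * _ => apply Rmult_lt_0_compat; positivity
  | |- 0 < / _ => apply Rinv_0_lt_compat; positivity
  | |- _ => first [assumption | lra]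
  end.

Ltac nonzero := apply Rgt_not_eq, Rlt_gt; positivity.

Ltac norm_facts u v :=
  let Hd := fresh "Hd" in let Hn := fresh "Hn" in
  assert (Hd : 0 < dot (vsub u v) (vsub u v)) by (apply dot_vsub_pos; congruence);
  assert (Hn := sqrt_lt_R0 _ Hd).

Ltac expand := unfold vnorm, dot, cross, vsub, vadd, vscale, basis, curve in *; simpl in *;
  unfold Rminus in *.

Ltac rewrite_derives :=
  repeat match goal with
  | H : is_derive ?F ?s ?v |- context [Derive _ ?s] =>
      rewrite (is_derive_unique F s v H); clear H
  end.

(* At [t = 0], [auto_derive] leaves [b + 0 * e] inside square roots, which [field]
   would treat as atoms different from [b]. *)
Ltac derive_field :=
  auto_derive; rewrite ?Rmult_0_l, ?Rplus_0_r;
  [ repeat split; first [nonzero | assumption | eexists; eassumption]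
  | rewrite_derives; field; repeat split; nonzero ].

Lemma is_derive_Ienergy_pos (be C c b e : V3) : c <> b ->
  is_derive (fun t => Ienergy be C (vsub c (vadd b (vscale t e)))) 0
    (Ienergy_dpos be C (vsub c b) e).
Proof.
  intros Hcb; norm_facts c b; pose proof PI_RGT_0.
  unfold Ienergy_dpos, Ienergy; destruct be, C, c, b, e; expand.
  derive_field.
Qed.

Lemma is_derive_Ienergy_vort (be C r e : V3) : 0 < vnorm r ->
  is_derive (fun t => Ienergy (vadd be (vscale t e)) C r) 0 (Ienergy e C r).
Proof.
  intros Hn; pose proof PI_RGT_0.
  unfold Ienergy; destruct be, C, r, e; expand.
  derive_field.
Qed.

Lemma is_derive_biot_savart_dir (A a b e : V3) (j : idx) : a <> b ->
  is_derive (fun t => coord j (biot_savart A a (vadd b (vscale t e)))) 0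
    (coord j (biot_savart_dpos A a b e)).
Proof.
  intros Hab; norm_facts a b; pose proof PI_RGT_0.
  unfold biot_savart_dpos, biot_savart; destruct A, a, b, e, j; expand; derive_field.
Qed.

Definition D_closed (A B C a b c : V3) : R :=
  Ienergy_dpos B C (vsub c b) (biot_savart A a b)
  + Ienergy (biot_savart_dpos A a b B) C (vsub c b).

Lemma Dterm_closed (w : V3 -> V3) (a b c : V3) : b <> a -> b <> c ->
  Dterm w a b c = D_closed (w a) (w b) (w c) a b c.
Proof.
  intros Hba Hbc.
  assert (Hpos : forall i, partial (fun b' => Ienergy (w b) (w c) (vsub c b')) i b
                           = Ienergy_dpos (w b) (w c) (vsub c b) (basis i)).
  { intros i; apply is_derive_unique, is_derive_Ienergy_pos; congruence. }
  assert (Hvort : forall i, partial (fun be => Ienergy be (w c) (vsub c b)) i (w b)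
                            = Ienergy (basis i) (w c) (vsub c b)).
  { intros i; apply is_derive_unique, is_derive_Ienergy_vort, vnorm_vsub_pos; congruence. }
  assert (Hvel : forall i j, partial (fun b' => coord j (vel w a b')) i b
                             = coord j (biot_savart_dpos (w a) a b (basis i))).
  { intros i j; apply is_derive_unique, is_derive_biot_savart_dir; congruence. }
  unfold Dterm, vec_of; cbv beta zeta; rewrite !Hpos, !Hvort, !Hvel.
  unfold D_closed, Ienergy_dpos, Ienergy, biot_savart_dpos, biot_savart, vel.
  norm_facts a b; norm_facts c b; pose proof PI_RGT_0.
  destruct (w a), (w b), (w c); expand; field; repeat split; nonzero.
Qed.

(* Eta-expanded to match the [Derive (fun x => X x) s] produced by [auto_derive]. *)
Lemma is_derive_V3_curve (X Y Z : R -> R) (s : R) (e : V3) :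
  is_derive_V3 (curve X Y Z) s e ->
  is_derive (fun t => X t) s (vx e) /\ is_derive (fun t => Y t) s (vy e)
  /\ is_derive (fun t => Z t) s (vz e).
Proof. intros H; exact (conj (H I0) (conj (H I1) (H I2))). Qed.

Lemma curve_eta (f : R -> V3) (t : R) :
  curve (fun u => vx (f u)) (fun u => vy (f u)) (fun u => vz (f u)) t = f t.
Proof. unfold curve; destruct (f t); reflexivity. Qed.

Lemma is_derive_V3_eta (f : R -> V3) (s : R) (e : V3) :
  is_derive_V3 f s e ->
  is_derive_V3 (curve (fun u => vx (f u)) (fun u => vy (f u)) (fun u => vz (f u))) s e.
Proof. intros H [| |]; exact (H _). Qed.

Lemma is_derive_Ienergy_curve (P Q S X Y Z : R -> R) (C c f e : V3) (s : R) :
  is_derive_V3 (curve P Q S) s f -> is_derive_V3 (curve X Y Z) s e ->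
  curve X Y Z s <> c ->
  is_derive (fun t => Ienergy (curve P Q S t) C (vsub c (curve X Y Z t))) s
    (Ienergy_dpos (curve P Q S s) C (vsub c (curve X Y Z s)) e
     + Ienergy f C (vsub c (curve X Y Z s))).
Proof.
  intros Hf He Hc.
  destruct (is_derive_V3_curve _ _ _ _ _ Hf) as (HP & HQ & HS).
  destruct (is_derive_V3_curve _ _ _ _ _ He) as (HX & HY & HZ).
  norm_facts c (curve X Y Z s); pose proof PI_RGT_0.
  unfold Ienergy_dpos, Ienergy; destruct C, c, f, e; expand.
  derive_field.
Qed.

Lemma is_derive_biot_savart_curve (A a e : V3) (X Y Z : R -> R) (s : R) :
  is_derive_V3 (curve X Y Z) s e -> curve X Y Z s <> a ->
  is_derive_V3 (fun t => biot_savart A a (curve X Y Z t)) s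
    (biot_savart_dpos A a (curve X Y Z s) e).
Proof.
  intros He Ha j.
  destruct (is_derive_V3_curve _ _ _ _ _ He) as (HX & HY & HZ).
  norm_facts a (curve X Y Z s); pose proof PI_RGT_0.
  unfold biot_savart_dpos, biot_savart; destruct A, a, e, j; expand; derive_field.
Qed.

Lemma Ienergy_dpos_swap (v e C c b : V3) : c <> b ->
  Ienergy_dpos v C (vsub c b) e
  = Ienergy_dpos e C (vsub c b) v - / 2 * dot (cross v e) (biot_savart C c b).
Proof.
  intros Hcb; norm_facts c b; pose proof PI_RGT_0.
  unfold Ienergy_dpos, biot_savart; destruct v, e, C, c, b; expand.
  field; repeat split; nonzero.
Qed.

Lemma dot_cross_swap (u e v : V3) : dot (cross u e) v = - dot (cross v e) u.
Proof. destruct u, e, v; unfold dot, cross; simpl; ring. Qed.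

Definition exchange_energy (A C a c b : V3) : R :=
  Ienergy (biot_savart A a b) C (vsub c b).

Lemma is_derive_exchange_energy (A C a c e : V3) (X Y Z : R -> R) (s : R) :
  is_derive_V3 (curve X Y Z) s e -> curve X Y Z s <> a -> curve X Y Z s <> c ->
  is_derive (fun t => exchange_energy A C a c (curve X Y Z t)) s
    (D_closed A e C a (curve X Y Z s) c
     - / 2 * dot (cross (biot_savart A a (curve X Y Z s)) e)
                 (biot_savart C c (curve X Y Z s))).
Proof.
  intros He Ha Hc.
  set (v := fun t => biot_savart A a (curve X Y Z t)).
  apply (is_derive_ext
    (fun t => Ienergy (curve (fun u => vx (v u)) (fun u => vy (v u)) (fun u => vz (v u)) t)
                      C (vsub c (curve X Y Z t)))).
  { intros t; rewrite curve_eta; reflexivity. }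
  replace (D_closed A e C a (curve X Y Z s) c - _)
    with (Ienergy_dpos (v s) C (vsub c (curve X Y Z s)) e
          + Ienergy (biot_savart_dpos A a (curve X Y Z s) e) C (vsub c (curve X Y Z s))).
  2:{ unfold D_closed, v; rewrite Ienergy_dpos_swap by congruence; ring. }
  rewrite <- (curve_eta v s) at 1.
  apply is_derive_Ienergy_curve; [| exact He | congruence].
  apply is_derive_V3_eta, is_derive_biot_savart_curve; assumption.
Qed.

Lemma is_derive_exchange_energy_sum (A C a c e : V3) (X Y Z : R -> R) (s : R) :
  is_derive_V3 (curve X Y Z) s e -> curve X Y Z s <> a -> curve X Y Z s <> c ->
  is_derive (fun t => exchange_energy A C a c (curve X Y Z t)
                      + exchange_energy C A c a (curve X Y Z t)) s
    (D_closed A e C a (curve X Y Z s) c + D_closed C e A c (curve X Y Z s) a).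
Proof.
  intros He Ha Hc.
  pose proof (is_derive_plus _ _ _ _ _
    (is_derive_exchange_energy A C a c e X Y Z s He Ha Hc)
    (is_derive_exchange_energy C A c a e X Y Z s He Hc Ha)) as H.
  rewrite (dot_cross_swap (biot_savart C c _)) in H.
  unfold plus in H; simpl in H; ring_simplify in H.
  exact H.
Qed.

Lemma D_closed_linear (A B C a b c : V3) : b <> a -> b <> c ->
  D_closed A B C a b c = vx B * D_closed A (basis I0) C a b c
    + vy B * D_closed A (basis I1) C a b c + vz B * D_closed A (basis I2) C a b c.
Proof.
  intros Hba Hbc; norm_facts a b; norm_facts c b; pose proof PI_RGT_0.
  unfold D_closed, Ienergy_dpos, Ienergy, biot_savart_dpos, biot_savart.
  destruct A, B, C, a, b, c; expand; field; repeat split; nonzero.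
Qed.

Lemma ex_derive_D_closed (A B C a c e : V3) (X Y Z : R -> R) (s : R) :
  is_derive_V3 (curve X Y Z) s e -> curve X Y Z s <> a -> curve X Y Z s <> c ->
  ex_derive (fun t => D_closed A B C a (curve X Y Z t) c) s.
Proof.
  intros He Ha Hc.
  destruct (is_derive_V3_curve _ _ _ _ _ He) as (HX & HY & HZ).
  norm_facts a (curve X Y Z s); norm_facts c (curve X Y Z s); pose proof PI_RGT_0.
  unfold D_closed, Ienergy_dpos, Ienergy, biot_savart_dpos, biot_savart.
  destruct A, B, C, a, c; expand.
  auto_derive; repeat split; first [nonzero | assumption | eexists; eassumption].
Qed.

Lemma vnorm_lt (v : V3) (d : R) :
  Rabs (vx v) < d / 3 -> Rabs (vy v) < d / 3 -> Rabs (vz v) < d / 3 -> vnorm v < d.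
Proof.
  intros Hx Hy Hz.
  apply Rabs_def2 in Hx; apply Rabs_def2 in Hy; apply Rabs_def2 in Hz.
  unfold vnorm, dot; rewrite <- (sqrt_Rsqr d) by lra.
  apply sqrt_lt_1_alt; unfold Rsqr; split; nra.
Qed.

Lemma continuous_cont_at_comp (g : V3 -> R) (f : R -> V3) (s : R) :
  cont_at g (f s) -> (forall j, continuous (fun t => coord j (f t)) s) ->
  continuous (fun t => g (f t)) s.
Proof.
  intros Hg Hf.
  apply filterlim_locally; intros eps.
  destruct (Hg eps (cond_pos eps)) as (d & Hd & Hball).
  assert (Hd3 : 0 < d / 3) by lra.
  pose proof (fun j => proj1 (filterlim_locally _ _) (Hf j) (mkposreal _ Hd3)) as Hnear.
  generalize (filter_and _ _ (Hnear I0) (filter_and _ _ (Hnear I1) (Hnear I2))).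
  apply filter_imp; intros t (H0 & H1 & H2); apply Hball, vnorm_lt; assumption.
Qed.

Lemma continuous_Dterm_along (w : V3 -> V3) (gam : R -> V3) (a c e : V3) (s : R) :
  smooth_field w -> is_derive_V3 gam s e ->
  (forall t, gam t <> a) -> (forall t, gam t <> c) ->
  continuous (fun t => Dterm w a (gam t) c) s.
Proof.
  intros Hw He Ha Hc.
  assert (Hgam : forall j, continuous (fun t => coord j (gam t)) s).
  { intros j; apply (@ex_derive_continuous R_AbsRing R_NormedModule); eexists; apply He. }
  assert (Hvort : forall j, continuous (fun t => coord j (w (gam t))) s).
  { intros j; apply (continuous_cont_at_comp (fun p => coord j (w p))).
    - apply (Hw j nil).
    - exact Hgam. }
  assert (Hcoef : forall B, continuous (fun t => D_closed (w a) B (w c) a (gam t) c) s).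
  { intros B; apply (@ex_derive_continuous R_AbsRing R_NormedModule).
    set (X := fun u => vx (gam u)); set (Y := fun u => vy (gam u));
      set (Z := fun u => vz (gam u)).
    apply (ex_derive_ext (fun t => D_closed (w a) B (w c) a (curve X Y Z t) c)).
    { intros t; unfold X, Y, Z; rewrite curve_eta; reflexivity. }
    apply ex_derive_D_closed with e; unfold X, Y, Z;
      [apply is_derive_V3_eta, He | rewrite curve_eta; auto ..]. }
  apply (continuous_ext (fun t => vx (w (gam t)) * D_closed (w a) (basis I0) (w c) a (gam t) c
    + vy (w (gam t)) * D_closed (w a) (basis I1) (w c) a (gam t) c
    + vz (w (gam t)) * D_closed (w a) (basis I2) (w c) a (gam t) c)).
  { intros t; rewrite Dterm_closed by auto; symmetry; apply D_closed_linear; auto. }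
  repeat apply (@continuous_plus R_UniformSpace R_AbsRing R_NormedModule);
    apply (@continuous_mult R_UniformSpace R_AbsRing);
    first [exact (Hvort I0) | exact (Hvort I1) | exact (Hvort I2) | apply Hcoef].
Qed.

Lemma is_derive_exchange_along_flow (w : V3 -> V3) (gam : R -> V3) (a c : V3) (s : R) :
  is_derive_V3 gam s (w (gam s)) -> gam s <> a -> gam s <> c ->
  is_derive (fun t => exchange_energy (w a) (w c) a c (gam t)
                      + exchange_energy (w c) (w a) c a (gam t)) s
    (Dterm w a (gam s) c + Dterm w c (gam s) a).
Proof.
  intros Hflow Ha Hc.
  set (X := fun u => vx (gam u)); set (Y := fun u => vy (gam u));
    set (Z := fun u => vz (gam u)).
  apply (is_derive_ext (fun t => exchange_energy (w a) (w c) a c (curve X Y Z t)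
                                 + exchange_energy (w c) (w a) c a (curve X Y Z t))).
  { intros t; unfold X, Y, Z; rewrite curve_eta; reflexivity. }
  rewrite !Dterm_closed by auto.
  set (e := w (gam s)); rewrite <- (curve_eta gam s); fold X Y Z.
  apply is_derive_exchange_energy_sum; unfold X, Y, Z;
    [apply is_derive_V3_eta, Hflow | rewrite curve_eta; assumption ..].
Qed.

Lemma is_RInt_derive_period (F f : R -> R) (T : R) :
  (forall s, is_derive F s (f s)) -> (forall s, continuous f s) -> F T = F 0 ->
  is_RInt f 0 T 0.
Proof.
  intros HF Hf Hper.
  pose proof (is_RInt_derive F f 0 T (fun x _ => HF x) (fun x _ => Hf x)) as H.
  rewrite Hper, (@minus_eq_zero R_AbelianGroup) in H; exact H.
Qed.

Theorem proposition2 (w : V3 -> V3) (a c : V3) (gam : R -> V3) (T : R) :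
  smooth_field w ->
  div_free w ->
  0 < T ->
  (forall s, gam (s + T) = gam s) ->
  (forall s j, is_derive (fun t => coord j (gam t)) s (coord j (w (gam s)))) ->
  (forall s, gam s <> a) ->
  (forall s, gam s <> c) ->
  a <> c ->
  RInt (fun s => Dterm w a (gam s) c) 0 T
  = - RInt (fun s => Dterm w c (gam s) a) 0 T.
Proof.
  intros Hw _ _ Hper Hflow Ha Hc _.
  assert (Hcont : forall x y, (forall s, gam s <> x) -> (forall s, gam s <> y) ->
                  forall s, continuous (fun t => Dterm w x (gam t) y) s).
  { intros x y Hx Hy s; apply continuous_Dterm_along with (w (gam s)); auto.
    exact (Hflow s). }
  assert (Hint : forall x y, (forall s, gam s <> x) -> (forall s, gam s <> y) ->
                 ex_RInt (fun t => Dterm w x (gam t) y) 0 T).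
  { intros x y Hx Hy; apply (@ex_RInt_continuous R_CompleteNormedModule); auto. }
  assert (Hzero : is_RInt (fun s => Dterm w a (gam s) c + Dterm w c (gam s) a) 0 T 0).
  { apply (is_RInt_derive_period (fun t => exchange_energy (w a) (w c) a c (gam t)
                                           + exchange_energy (w c) (w a) c a (gam t))).
    - intros s; apply is_derive_exchange_along_flow; auto. exact (Hflow s).
    - intros s; apply (@continuous_plus R_UniformSpace R_AbsRing R_NormedModule); auto.
    - rewrite <- (Rplus_0_l T), Hper; reflexivity. }
  apply (@is_RInt_unique R_CompleteNormedModule) in Hzero.
  rewrite (@RInt_plus R_CompleteNormedModule) in Hzero by auto.
  unfold plus in Hzero; simpl in Hzero; lra.
Qed.
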